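(* The functor $\partial\mathrm{Spec}\colon \mathsf{Ring}^{\mathrm{op}}\to\mathsf{Set}$, together with the identity natural transformation $\partial\mathrm{Spec}|_{\mathsf{CommRing}^{\mathrm{op}}}\to\operatorname{Spec}$, is the right Kan extension of $\operatorname{Spec}\colon\mathsf{CommRing}^{\mathrm{op}}\to\mathsf{Set}$ along the inclusion $\mathsf{CommRing}^{\mathrm{op}}\subseteq\mathsf{Ring}^{\mathrm{op}}$. That is, for every functor $F\colon\mathsf{Ring}^{\mathrm{op}}\to\mathsf{Set}$ and every natural transformation $\eta\colon F|_{\mathsf{CommRing}^{\mathrm{op}}}\to\operatorname{Spec}$ there is a unique natural transformation $\delta\colon F\to\partial\mathrm{Spec}$ whose restriction to $\mathsf{CommRing}^{\mathrm{op}}$ equals $\eta$. In particular, $\partial\mathrm{Spec}$ (with the identity isomorphism $\partial\mathrm{Spec}|_{\mathsf{CommRing}^{\mathrm{op}}}=\operatorname{Spec}$) is a terminal object of the category $r^{-1}(\operatorname{Spec})$.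
   Context: Rings are unital and homomorphisms unital. For a ring $R$, a subset $I\subseteq R$ is a partial ideal if for all commuting $a,b\in R$ (i.e. $ab=ba$): $a,b\in I\Rightarrow a+b\in I$, and $b\in I\Rightarrow ab\in I$. A partial ideal $P$ is prime if $P\neq R$ and for all commuting $x,y\in R$, $xy\in P$ implies $x\in P$ or $y\in P$. $\partial\mathrm{Spec}(R)$ is the set of prime partial ideals of $R$, and for a ring homomorphism $f\colon R\to S$, $\partial\mathrm{Spec}(f)\colon\partial\mathrm{Spec}(S)\to\partial\mathrm{Spec}(R)$ is $P\mapsto f^{-1}(P)$; on commutative rings $\partial\mathrm{Spec}$ coincides with $\operatorname{Spec}$ (prime ideals, preimage maps). The category $r^{-1}(\operatorname{Spec})$ has as objects pairs $(F,\phi)$ with $F\colon\mathsf{Ring}^{\mathrm{op}}\to\mathsf{Set}$ a functor and $\phi\colon F|_{\mathsf{CommRing}^{\mathrm{op}}}\to\operatorname{Spec}$ a natural isomorphism; a morphism $(F,\phi)\to(F',\phi')$ is a natural transformation $\psi\colon F\to F'$ with $\phi'\circ\psi|_{\mathsf{CommRing}^{\mathrm{op}}}=\phi$. *)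

From HB Require Import structures.
From mathcomp Require Import all_boot all_algebra.
Set Implicit Arguments. Unset Strict Implicit. Unset Printing Implicit Defensive.
Import GRing.Theory.
Local Open Scope ring_scope.

(* Rings = unital, possibly zero rings (pzRingType); homomorphisms = unital
   ring morphisms {rmorphism R -> S}; commutative rings = comPzRingType. *)

Definition partial_ideal (R : pzRingType) (I : R -> Prop) : Prop :=
  I 0 /\
  (forall a b : R, GRing.comm a b -> I a -> I b -> I (a + b)) /\
  (forall a b : R, GRing.comm a b -> I b -> I (a * b)).

Definition prime_partial_ideal (R : pzRingType) (P : R -> Prop) : Prop :=
  partial_ideal P /\ (exists r : R, ~ P r) /\
  (forall x y : R, GRing.comm x y -> P (x * y) -> P x \/ P y).

Definition dSpec (R : pzRingType) := {P : R -> Prop | prime_partial_ideal P}.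

Definition prime_ideal (R : comPzRingType) (P : R -> Prop) : Prop :=
  P 0 /\ (forall a b : R, P a -> P b -> P (a + b)) /\
  (forall a b : R, P b -> P (a * b)) /\ (exists r : R, ~ P r) /\
  (forall x y : R, P (x * y) -> P x \/ P y).

Definition Spec (R : comPzRingType) := {P : R -> Prop | prime_ideal P}.

Definition preim_set (R S : pzRingType) (f : {rmorphism R -> S}) (P : S -> Prop)
  : R -> Prop := fun r => P (f r).

(* A functor Ring^op -> Set (sets modelled as types). *)
Record RingPsh := {
  Fobj : pzRingType -> Type;
  Fmap : forall R S : pzRingType, {rmorphism R -> S} -> Fobj S -> Fobj R;
  Fmap_id : forall (R : pzRingType) (i : {rmorphism R -> R}),
      (forall r, i r = r) -> forall y, Fmap i y = y;
  Fmap_comp : forall (R S T : pzRingType) (f : {rmorphism R -> S})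
      (g : {rmorphism S -> T}) (h : {rmorphism R -> T}),
      (forall r, h r = g (f r)) -> forall y, Fmap h y = Fmap f (Fmap g y)
}.

(* Natural transformations F|_{CommRing^op} -> Spec
   (naturality: Spec(f) is preimage along f). *)
Definition nat_to_Spec (F : RingPsh)
  (eta : forall R : comPzRingType, Fobj F R -> Spec R) : Prop :=
  forall (R S : comPzRingType) (f : {rmorphism R -> S}) (y : Fobj F S),
    proj1_sig (eta R (@Fmap F _ _ f y)) = preim_set f (proj1_sig (eta S y)).

(* Natural transformations F -> dSpec (dSpec(f) is preimage along f). *)
Definition nat_to_dSpec (F : RingPsh)
  (delta : forall R : pzRingType, Fobj F R -> dSpec R) : Prop :=
  forall (R S : pzRingType) (f : {rmorphism R -> S}) (y : Fobj F S),
    proj1_sig (delta R (@Fmap F _ _ f y)) = preim_set f (proj1_sig (delta S y)).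

(* delta restricted to CommRing^op, composed with the identity dSpec|Comm = Spec,
   equals eta (comparison of the underlying subsets). *)
Definition restricts_to (F : RingPsh)
  (delta : forall R : pzRingType, Fobj F R -> dSpec R)
  (eta : forall R : comPzRingType, Fobj F R -> Spec R) : Prop :=
  forall (R : comPzRingType) (y : Fobj F R),
    proj1_sig (delta R y) = proj1_sig (eta R y).

(* A natural transformation into Spec already knows, for every a in a ring R,
   whether a lies in "its" prime: pull the point of F R back along the
   evaluation Z[X] -> R, X |-> a, and ask whether X lies in the resulting prime
   of Z[X].  Naturality forces any extension to agree with this recipe, and
   the recipe gives a prime partial ideal because any two commuting elements
   a, b come from the commutative ring Z[X][Y] via X |-> a, Y |-> b, where the
   recipe returns a genuine prime ideal. *)

From HB Require Import structures.
From mathcomp Require Import all_boot all_algebra.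
From Stdlib Require Import FunctionalExtensionality ProofIrrelevance.
Set Implicit Arguments. Unset Strict Implicit. Unset Printing Implicit Defensive.
Import GRing.Theory.
Local Open Scope ring_scope.

Lemma rmorph_poly_int_eq (S : pzRingType) (f g : {rmorphism {poly int} -> S}) :
  f 'X = g 'X -> f =1 g.
Proof.
move=> fgX; elim/poly_ind => [|p c IHp]; first by rewrite !rmorph0.
rewrite !rmorphD !rmorphM IHp fgX.
have -> : c%:P = c%:~R :> {poly int} by rewrite -{1}[c]intz rmorph_int.
by rewrite !rmorph_int.
Qed.

Section PolyEvaluation.
Variable R : pzRingType.

(* [horner_morph] needs a nontrivial target and [R] may be the zero ring, so we
   evaluate in [R * int] and project. *)
Definition R_int := (R * int)%type.
HB.instance Definition _ := GRing.PzRing.on R_int.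
Fact R_int_one_neq0 : (1 : R_int) != 0.
Proof. by rewrite xpair_eqE oner_eq0 andbF. Qed.
HB.instance Definition _ := GRing.PzSemiRing_isNonZero.Build R_int R_int_one_neq0.

Lemma commr_int_R_int (a : R) : commr_rmorph (intr : int -> R_int) (a, 0).
Proof. by move=> n; apply: commr_int. Qed.

Definition eval_at (a : R) (p : {poly int}) : R :=
  (horner_morph (commr_int_R_int a) p).1.

Fact eval_at_zmod a : zmod_morphism (eval_at a).
Proof. by move=> p q; rewrite /eval_at rmorphB. Qed.
HB.instance Definition _ a :=
  GRing.isZmodMorphism.Build {poly int} R (eval_at a) (eval_at_zmod a).
Fact eval_at_monoid a : monoid_morphism (eval_at a).
Proof. by split => [|p q]; rewrite /eval_at ?rmorph1 ?rmorphM. Qed.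
HB.instance Definition _ a :=
  GRing.isMonoidMorphism.Build {poly int} R (eval_at a) (eval_at_monoid a).

Lemma eval_atX a : eval_at a 'X = a.
Proof. by rewrite /eval_at horner_morphX. Qed.

Lemma commr_eval_at (a b : R) : GRing.comm a b ->
  commr_rmorph (horner_morph (commr_int_R_int a)) (b, 0).
Proof.
move=> ab; elim/poly_ind => [|p c IHp]; first by rewrite rmorph0; apply: commr0.
rewrite rmorphD rmorphM /=.
have -> : horner_morph (commr_int_R_int a) 'X = (a, 0) by exact: horner_morphX.
have -> : horner_morph (commr_int_R_int a) c%:P = c%:~R by rewrite horner_morphC.
apply: commrD; last exact: commr_int.
apply: commrM => //.
by rewrite /GRing.comm /=; congr (_, _); rewrite ?mulr0 ?mul0r.
Qed.

Definition eval_at2 (a b : R) (ab : GRing.comm a b) (p : {poly {poly int}}) : R :=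
  (horner_morph (commr_eval_at ab) p).1.

Fact eval_at2_zmod a b ab : zmod_morphism (@eval_at2 a b ab).
Proof. by move=> p q; rewrite /eval_at2 rmorphB. Qed.
HB.instance Definition _ a b ab :=
  GRing.isZmodMorphism.Build {poly {poly int}} R (@eval_at2 a b ab) (eval_at2_zmod ab).
Fact eval_at2_monoid a b ab : monoid_morphism (@eval_at2 a b ab).
Proof. by split => [|p q]; rewrite /eval_at2 ?rmorph1 ?rmorphM. Qed.
HB.instance Definition _ a b ab :=
  GRing.isMonoidMorphism.Build {poly {poly int}} R (@eval_at2 a b ab) (eval_at2_monoid ab).

Lemma eval_at2X a b ab : @eval_at2 a b ab 'X = b.
Proof. by rewrite /eval_at2 horner_morphX. Qed.

Lemma eval_at2XC a b ab : @eval_at2 a b ab 'X%:P = a.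
Proof. by rewrite /eval_at2 horner_morphC /= horner_morphX. Qed.

End PolyEvaluation.

Lemma eval_at_rmorph (R S : pzRingType) (f : {rmorphism R -> S}) (a : R) :
  eval_at (f a) =1 f \o eval_at a.
Proof. by apply: (rmorph_poly_int_eq (f := eval_at (f a))); rewrite /= !eval_atX. Qed.

Lemma prime_partial_ideal_of_comm_pullbacks (R : pzRingType) (P : R -> Prop) :
  (forall a b : R, GRing.comm a b ->
     exists (C : comPzRingType) (g : {rmorphism C -> R}) (Q : C -> Prop) (u v : C),
       [/\ prime_ideal Q, g u = a, g v = b & forall c, P (g c) <-> Q c]) ->
  prime_partial_ideal P.
Proof.
move=> pullback.
have [C [g [Q [u [v [[Q0 [_ [QM [[r Qr] _]]]] _ _ PQ]]]]]] :=
  pullback 0 0 (commr0 0).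
split; [split; [|split] | split].
- by rewrite -(rmorph0 g); apply/PQ.
- move=> a b ab Pa Pb.
  have [C' [g' [Q' [u' [v' [[_ [Q'D _]] ua vb PQ']]]]]] := pullback a b ab.
  by subst a b; rewrite -rmorphD; apply/PQ'; apply: Q'D; apply/PQ'.
- move=> a b ab Pb.
  have [C' [g' [Q' [u' [v' [[_ [_ [Q'M _]]] ua vb PQ']]]]]] := pullback a b ab.
  by subst a b; rewrite -rmorphM; apply/PQ'; apply: Q'M; apply/PQ'.
- exists 1; rewrite -(rmorph1 g) => /PQ Q1.
  by apply: Qr; rewrite -[r]mulr1; apply: QM.
- move=> a b ab.
  have [C' [g' [Q' [u' [v' [[_ [_ [_ [_ Q'prime]]]] ua vb PQ']]]]]] := pullback a b ab.
  by subst a b; rewrite -rmorphM => /PQ' /Q'prime [/PQ' | /PQ']; [left | right].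
Qed.

Lemma dSpec_eq (R : pzRingType) (P Q : dSpec R) : sval P = sval Q -> P = Q.
Proof. by apply: eq_sig_hprop => ? ? ?; apply: proof_irrelevance. Qed.

Section KanExtension.
Variable F : RingPsh.
Variable eta : forall R : comPzRingType, Fobj F R -> Spec R.
Hypothesis eta_nat : nat_to_Spec eta.

Definition int_poly := ({poly int} : comPzRingType).

Definition dspec_of (R : pzRingType) (y : Fobj F R) : R -> Prop :=
  fun a => sval (@eta int_poly (Fmap (eval_at a) y)) 'X.

Lemma dspec_of_Fmap (R S : pzRingType) (f : {rmorphism R -> S}) (y : Fobj F S) :
  dspec_of (Fmap f y) = preim_set f (dspec_of y).
Proof.
apply: functional_extensionality => a.
by rewrite /dspec_of /preim_set (Fmap_comp (eval_at_rmorph f a)).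
Qed.

Lemma dspec_of_comm (R : comPzRingType) (y : Fobj F R) :
  dspec_of y = sval (eta y).
Proof.
apply: functional_extensionality => a.
by rewrite /dspec_of (eta_nat (R := int_poly)) /preim_set -[in RHS](eval_atX a).
Qed.

Lemma dspec_of_prime (R : pzRingType) (y : Fobj F R) :
  prime_partial_ideal (dspec_of y).
Proof.
apply: prime_partial_ideal_of_comm_pullbacks => a b ab.
pose C := ({poly {poly int}} : comPzRingType).
exists C, (eval_at2 ab), (sval (eta (Fmap (eval_at2 ab) y : Fobj F C))), 'X%:P, 'X.
split; [exact: svalP | exact: eval_at2XC | exact: eval_at2X | move=> c].
by rewrite -(dspec_of_comm (R := C)) dspec_of_Fmap.
Qed.

Definition dspec_ext (R : pzRingType) (y : Fobj F R) : dSpec R :=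
  exist _ (dspec_of y) (dspec_of_prime y).

Lemma dspec_ext_nat : nat_to_dSpec dspec_ext.
Proof. by move=> R S f y; apply: dspec_of_Fmap. Qed.

Lemma dspec_ext_restricts : restricts_to dspec_ext eta.
Proof. by move=> R y; apply: dspec_of_comm. Qed.

Lemma restricts_to_dspec_ext
    (delta : forall R : pzRingType, Fobj F R -> dSpec R) :
  nat_to_dSpec delta -> restricts_to delta eta ->
  forall (R : pzRingType) (y : Fobj F R), delta R y = dspec_ext y.
Proof.
move=> delta_nat delta_eta R y; apply: dSpec_eq.
apply: functional_extensionality => a /=.
by rewrite /dspec_of -delta_eta delta_nat /preim_set -[in LHS](eval_atX a).
Qed.

End KanExtension.

Theorem theorem2p15 :
  forall (F : RingPsh) (eta : forall R : comPzRingType, Fobj F R -> Spec R),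
    nat_to_Spec eta ->
    (exists delta : forall R : pzRingType, Fobj F R -> dSpec R,
        nat_to_dSpec delta /\ restricts_to delta eta) /\
    (forall delta1 delta2 : forall R : pzRingType, Fobj F R -> dSpec R,
        nat_to_dSpec delta1 -> restricts_to delta1 eta ->
        nat_to_dSpec delta2 -> restricts_to delta2 eta ->
        forall (R : pzRingType) (y : Fobj F R), delta1 R y = delta2 R y).
Proof.
move=> F eta eta_nat; split.
  by exists (dspec_ext eta_nat); split; [apply: dspec_ext_nat | apply: dspec_ext_restricts].
move=> delta1 delta2 nat1 eta1 nat2 eta2 R y.
by rewrite (restricts_to_dspec_ext eta_nat nat1 eta1) (restricts_to_dspec_ext eta_nat nat2 eta2).
Qed.
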